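(* Let $\mathbb{F}\in\{\mathbb{R},\mathbb{C}\}$, and let $S\in\mathsf{GL}_m(\mathbb{F})$ and $T\in\mathsf{GL}_n(\mathbb{F})$ be Perron similarities with $m>1$ and $n>1$. Then $\mathcal{C}(S)\otimes\mathcal{C}(T)$ is a proper subset of $\mathcal{C}(S\otimes T)$.
   Context: For $x\in\mathbb{F}^n$, $D_x$ is the diagonal matrix with $(i,i)$-entry $x_i$; $M\ge0$ means every entry of $M$ is a nonnegative real number. $\mathcal{C}(S)=\{x\in\mathbb{F}^n\mid SD_xS^{-1}\ge 0\}$ for $S\in\mathsf{GL}_n(\mathbb{F})$. An invertible $S$ is a Perron similarity if for some $i$ the column $Se_i$ and the row $e_i^\top S^{-1}$ are both entrywise nonnegative or both entrywise nonpositive (real). $\otimes$ is the Kronecker product; for sets $X,Y$ of vectors, $X\otimes Y=\{x\otimes y\mid x\in X,\ y\in Y\}$. *)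

(* Kronecker product = mxtens.tensmx (real_closed library):
   (A *t B) (i1*p+i2, j1*q+j2) = A i1 j1 * B i2 j2. *)
From HB Require Import structures.
From mathcomp Require Import all_boot all_order all_algebra.
From mathcomp Require Import mxtens complex.
From mathcomp Require Import classical_sets reals.
Set Implicit Arguments. Unset Strict Implicit. Unset Printing Implicit Defensive.
Import Order.TTheory GRing.Theory Num.Theory.
Local Open Scope ring_scope.

(* M >= 0 : every entry is a nonnegative real (in a numFieldType, 0 <= z
   means z is real and nonnegative). *)
Definition mx_nonneg (F : numFieldType) m n (M : 'M[F]_(m, n)) : Prop :=
  forall i j, 0 <= M i j.

Definition Dmx (F : numFieldType) n (x : 'rV[F]_n) : 'M[F]_n := diag_mx x.

Definition Cset (F : numFieldType) n (S : 'M[F]_n) : set 'rV[F]_n :=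
  [set x | mx_nonneg (S *m Dmx x *m invmx S)].

Definition perron_similarity (F : numFieldType) n (S : 'M[F]_n) : Prop :=
  S \in unitmx /\
  exists i : 'I_n,
    ((forall k, 0 <= S k i) /\ (forall k, 0 <= invmx S i k)) \/
    ((forall k, S k i <= 0) /\ (forall k, invmx S i k <= 0)).

Definition kronv (F : numFieldType) m n (x : 'rV[F]_m) (y : 'rV[F]_n)
  : 'rV[F]_(m * n) := x *t y.

Definition kron_set (F : numFieldType) m n (X : set 'rV[F]_m) (Y : set 'rV[F]_n)
  : set 'rV[F]_(m * n) :=
  [set z | exists x y, X x /\ Y y /\ z = kronv x y].

(* C(S) is a convex cone containing the all-ones vector (S I S^-1 = I), and for a
   Perron similarity it also contains the unit vector e_i of the Perron index i.
   Since (S (x) T) D_(x (x) y) (S (x) T)^-1 = (S D_x S^-1) (x) (T D_y T^-1), the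
   inclusion C(S) (x) C(T) <= C(S (x) T) holds.  It is proper: z = e_i (x) 1 + 1 (x) e_j
   lies in C(S (x) T), yet reshaped as an m x n matrix it has the 2 x 2 minor
   [[2, 1], [1, 0]] at rows i, k and columns j, l (k <> i, l <> j), so it has rank 2
   and is not a Kronecker product of vectors. *)
From HB Require Import structures.
From mathcomp Require Import all_boot all_order all_algebra.
From mathcomp Require Import mxtens complex.
From mathcomp Require Import classical_sets reals.
Import Order.TTheory GRing.Theory Num.Theory.
Local Open Scope ring_scope.
Local Open Scope classical_set_scope.
Set Implicit Arguments. Unset Strict Implicit.

Section TensorProduct.
Variable R : comUnitRingType.

Lemma tensmx11 m n : (1%:M : 'M[R]_m) *t (1%:M : 'M[R]_n) = 1%:M.
Proof.
apply/matrixP => a b.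
case: (mxtens_indexP a) => i j; case: (mxtens_indexP b) => k l.
rewrite tensmxE !mxE (can_eq (@mxtens_indexK m n)) xpair_eqE.
by case: (i == k); case: (j == l); rewrite ?mulr1 ?mulr0.
Qed.

Lemma invmx_tens m n (S : 'M[R]_m) (T : 'M[R]_n) :
  S \in unitmx -> T \in unitmx -> invmx (S *t T) = invmx S *t invmx T.
Proof.
move=> uS uT.
have invST : (invmx S *t invmx T) *m (S *t T) = 1%:M.
  by rewrite tensmx_mul !mulVmx // tensmx11.
have uST : S *t T \in unitmx by case/mulmx1_unit: invST.
by rewrite -[LHS]mul1mx -invST -mulmxA mulmxV // mulmx1.
Qed.

Lemma tensrvE m n (x : 'rV[R]_m) (y : 'rV[R]_n) a b :
  (x *t y : 'rV_(m * n)) 0 (mxtens_index (a, b)) = x 0 a * y 0 b.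
Proof.
rewrite mxE mxtens_indexK.
by case: (mxtens_unindex _) => u v; rewrite (ord1 u) (ord1 v).
Qed.

Lemma diag_mx_tens m n (x : 'rV[R]_m) (y : 'rV[R]_n) :
  diag_mx (x *t y : 'rV_(m * n)) = diag_mx x *t diag_mx y.
Proof.
apply/matrixP => a b.
case: (mxtens_indexP a) => i j; case: (mxtens_indexP b) => k l.
rewrite [LHS]mxE tensrvE tensmxE !mxE (can_eq (@mxtens_indexK m n)) xpair_eqE.
by case: (i == k); case: (j == l); rewrite ?mulr1n ?mulr0n ?mulr0 ?mul0r.
Qed.

Lemma tensrv_minor m n (x : 'rV[R]_m) (y : 'rV[R]_n) i k j l :
  let z a b := (x *t y : 'rV_(m * n)) 0 (mxtens_index (a, b)) in
  z i j * z k l = z i l * z k j.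
Proof. by rewrite /= !tensrvE mulrACA [RHS]mulrACA [y 0 j * _]mulrC. Qed.

End TensorProduct.

Section Cone.
Variable F : numFieldType.

Lemma Cset_tens m n (S : 'M[F]_m) (T : 'M[F]_n) :
  S \in unitmx -> T \in unitmx ->
  kron_set (Cset S) (Cset T) `<=` Cset (S *t T).
Proof.
move=> uS uT _ [x [y [Cx [Cy ->]]]] a b.
rewrite /Dmx /kronv diag_mx_tens invmx_tens // !tensmx_mul.
case: (mxtens_indexP a) => i j; case: (mxtens_indexP b) => k l.
by rewrite tensmxE mulr_ge0 // ?Cx ?Cy.
Qed.

Lemma CsetD n (S : 'M[F]_n) x y : Cset S x -> Cset S y -> Cset S (x + y).
Proof.
move=> Cx Cy k l.
by rewrite /Dmx raddfD /= mulmxDr mulmxDl mxE addr_ge0 // ?Cx ?Cy.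
Qed.

Lemma Cset_const1 n (S : 'M[F]_n) : S \in unitmx -> Cset S (const_mx 1).
Proof.
by move=> uS k l; rewrite /Dmx diag_const_mx mulmx1 mulmxV // mxE ler0n.
Qed.

Lemma Cset_perron n (S : 'M[F]_n) :
  perron_similarity S -> exists i : 'I_n, Cset S 'e_i.
Proof.
case=> _ [i perron_i]; exists i => k l.
rewrite mxE; apply: sumr_ge0 => t _; rewrite mul_mx_diag !mxE eqxx /=.
case: eqP => [->|_]; last by rewrite mulr0 mul0r.
by rewrite mulr1; case: perron_i => -[Si Si']; [exact: mulr_ge0 | exact: mulr_le0].
Qed.

Lemma exists_ord_neq n (i : 'I_n) : (1 < n)%N -> exists k, k != i.
Proof.
case: n i => [[]//|n] i n_gt1.
by exists (lift i (Ordinal (n_gt1 : (0 < n)%N))); rewrite eq_sym neq_lift.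
Qed.

Lemma Cset_tens_proper m n (S : 'M[F]_m) (T : 'M[F]_n) :
  (1 < m)%N -> (1 < n)%N -> perron_similarity S -> perron_similarity T ->
  kron_set (Cset S) (Cset T) `<` Cset (S *t T).
Proof.
move=> m_gt1 n_gt1 pS pT.
have tens_sub := Cset_tens pS.1 pT.1.
split=> //.
have [i Ci] := Cset_perron pS; have [j Cj] := Cset_perron pT.
have [k ki] := exists_ord_neq i m_gt1; have [l lj] := exists_ord_neq j n_gt1.
pose z : 'rV[F]_(m * n) := kronv 'e_i (const_mx 1) + kronv (const_mx 1) 'e_j.
have Cz : Cset (S *t T) z.
  apply: CsetD; apply: tens_sub.
    by exists 'e_i, (const_mx 1); split; [|split; [exact: Cset_const1 pT.1|]].
  by exists (const_mx 1), 'e_j; split; [exact: Cset_const1 pS.1|].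
have zE a b : z 0 (mxtens_index (a, b)) = (a == i)%:R + (b == j)%:R.
  by rewrite mxE /kronv !tensrvE !mxE !eqxx mulr1 mul1r.
move=> /(_ z Cz) [x [y [_ [_ z_kron]]]].
have := tensrv_minor x y i k j l; rewrite /= -/(kronv x y) -z_kron !zE.
rewrite !eqxx (negbTE ki) (negbTE lj) !addr0 add0r mulr0 mulr1.
by move=> /esym/eqP; rewrite mulr1n oner_eq0.
Qed.

End Cone.

Theorem theorem4p6 (R : realType) :
  (forall (m n : nat) (S : 'M[R]_m) (T : 'M[R]_n),
     (1 < m)%N -> (1 < n)%N ->
     perron_similarity S -> perron_similarity T ->
     kron_set (Cset S) (Cset T) `<` Cset (S *t T))
  /\
  (forall (m n : nat) (S : 'M[R[i]]_m) (T : 'M[R[i]]_n),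
     (1 < m)%N -> (1 < n)%N ->
     perron_similarity S -> perron_similarity T ->
     kron_set (Cset S) (Cset T) `<` Cset (S *t T)).
Proof. by split=> *; apply: Cset_tens_proper. Qed.
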